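(* Let $M$ be a finite-horizon MDP with an offline dataset $\mathcal D$ and dataset-induced MDP $M_{\mathcal D}$, and let $\pi$ be batch-constrained with respect to $\mathcal D$. If $\max_{(s,a):\rho_\pi^{M_{\mathcal D}}(s,a)>0}\|P^{M_{\mathcal D}}(\cdot\mid s,a)-P^M(\cdot\mid s,a)\|_1\le\epsilon_P$ and $\max_{(s,a,r):\rho_\pi^{M_{\mathcal D}}(s,a)>0}|R^{M_{\mathcal D}}(r\mid s,a)-R^M(r\mid s,a)|\le\epsilon_R$, then $$\|\rho_\pi^M(s)-\rho_\pi^{M_{\mathcal D}}(s)\|_1+\|\rho_\pi^M(s,a,r)-\rho_\pi^{M_{\mathcal D}}(s,a,r)\|_1\le|\mathcal S|(|\mathcal A||\mathcal R|+1)\frac{H-1}{2}\epsilon_P+|\mathcal S||\mathcal A||\mathcal R|\epsilon_R.$$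
   Context: $M=(\mathcal S,\mathcal A,\mathcal R,H,P^M,R^M)$ is a finite-horizon MDP with finite spaces, fixed initial state $s_0$, state space partitioned into disjoint timestep layers $\mathcal S_h$. Visitation distributions: $\rho_\pi(s_0)=1/H$, $\rho_\pi(s)=\sum_{\tilde s\in\mathcal S_{h-1},\tilde a}\rho_\pi(\tilde s)\pi(\tilde a\mid\tilde s)P(s\mid\tilde s,\tilde a)$ for $s\in\mathcal S_h$, $h>0$; $\rho_\pi(s,a)=\rho_\pi(s)\pi(a\mid s)$; $\rho_\pi(s,a,r)=\rho_\pi(s,a)R(r\mid s,a)$. $M_{\mathcal D}$ has empirical transitions $N(s,a,s')/N(s,a)$ and rewards $N(s,a,r)/N(s,a)$ when $N(s,a)>0$ and $0$ otherwise ($N$ counts occurrences in $\mathcal D$). $\pi$ is batch-constrained if $\pi(a\mid s)=0$ whenever $(s,a)$ does not appear in $\mathcal D$. *)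

From mathcomp Require Import all_boot all_order all_algebra.
Set Implicit Arguments. Unset Strict Implicit. Unset Printing Implicit Defensive.
Import Order.TTheory GRing.Theory Num.Theory.
Local Open Scope ring_scope.

Section MDP.
Variables (R : realFieldType) (S A Rew : finType).

Definition dataset := seq (S * A * Rew * S).

Definition N_sa (D : dataset) (s : S) (a : A) : nat :=
  count (fun x => (x.1.1.1 == s) && (x.1.1.2 == a)) D.
Definition N_sas (D : dataset) (s : S) (a : A) (s' : S) : nat :=
  count (fun x => [&& x.1.1.1 == s, x.1.1.2 == a & x.2 == s']) D.
Definition N_sar (D : dataset) (s : S) (a : A) (r : Rew) : nat :=
  count (fun x => [&& x.1.1.1 == s, x.1.1.2 == a & x.1.2 == r]) D.

Definition P_D (D : dataset) (s : S) (a : A) (s' : S) : R :=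
  if N_sa D s a == 0%N then 0 else (N_sas D s a s')%:R / (N_sa D s a)%:R.
Definition R_D (D : dataset) (s : S) (a : A) (r : Rew) : R :=
  if N_sa D s a == 0%N then 0 else (N_sar D s a r)%:R / (N_sa D s a)%:R.

Definition batch_constrained (D : dataset) (pi : S -> A -> R) : Prop :=
  forall s a, N_sa D s a = 0%N -> pi s a = 0.

(* Layered visitation distribution; layer : S -> nat gives the timestep. *)
Variables (layer : S -> nat) (s0 : S) (H : nat).

Fixpoint rho_layer (pi : S -> A -> R) (P : S -> A -> S -> R) (h : nat) : S -> R :=
  match h with
  | 0 => fun s => if s == s0 then 1 / H%:R else 0
  | h'.+1 => fun s =>
      \sum_(t : S | layer t == h') \sum_(b : A)
        rho_layer pi P h' t * pi t b * P t b s
  end.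

Definition rho_s (pi : S -> A -> R) (P : S -> A -> S -> R) (s : S) : R :=
  rho_layer pi P (layer s) s.
Definition rho_sa pi P (s : S) (a : A) : R := rho_s pi P s * pi s a.
Definition rho_sar pi P (Rk : S -> A -> Rew -> R) (s : S) (a : A) (r : Rew) : R :=
  rho_sa pi P s a * Rk s a r.

End MDP.
Arguments P_D R {S A Rew} D s a s'.
Arguments R_D R {S A Rew} D s a r.

(* Both visitation distributions start from the same mass 1/H at s0 and are
   propagated layer by layer by the policy and the two transition kernels.
   Writing rho' pi P' - rho pi P as (rho' - rho) pi P' + rho pi (P' - P), one
   step increases the L1 distance on a layer by at most eps_P times the mass of
   the previous layer, which is at most 1/H; so at layer h the distance is at
   most h eps_P / H <= (H - 1)/2 eps_P.  The same splitting applied to the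
   reward kernels adds at most eps_R to each state-action-reward entry, and
   summing the entrywise bounds gives the claim. *)
From mathcomp Require Import all_boot all_order all_algebra.
From mathcomp Require Import ring lra.
Set Implicit Arguments. Unset Strict Implicit. Unset Printing Implicit Defensive.
Import Order.TTheory GRing.Theory Num.Theory.
Local Open Scope ring_scope.

Lemma ler_sum_subset (R : numDomainType) (I : finType) (p q : pred I) (F : I -> R) :
  (forall i, 0 <= F i) -> {subset p <= q} ->
  \sum_(i | p i) F i <= \sum_(i | q i) F i.
Proof.
move=> F_ge0 pq; rewrite [X in _ <= X](bigID p) /=.
rewrite (eq_bigl (fun i => q i && p i)) ?lerDl ?sumr_ge0 // => i.
by case: (boolP (p i)) => [/pq|]; rewrite ?andbT ?andbF.
Qed.

Lemma ler_term_sum (R : numDomainType) (I : finType) (p : pred I) (F : I -> R) i :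
  (forall i, 0 <= F i) -> p i -> F i <= \sum_(j | p j) F j.
Proof. by move=> F_ge0 p_i; rewrite (bigD1 i) //= lerDl sumr_ge0. Qed.

Lemma le1_of_sum1 (R : numDomainType) (I : finType) (F : I -> R) i :
  (forall i, 0 <= F i) -> \sum_j F j = 1 -> F i <= 1.
Proof. by move=> F_ge0 <-; apply: ler_term_sum. Qed.

Lemma ratio_le_half_pred (R : realFieldType) (l n : nat) :
  (l < n)%N -> l%:R / n%:R <= (n%:R - 1) / 2 :> R.
Proof.
case: n => [//|[|n]]; first by rewrite ltnS leqn0 => /eqP ->; rewrite !mul0r subrr mul0r.
rewrite ltnS -(ler_nat R) ler_pdivrMr ?ltr0n // -[n.+2%:R]natr1 -[n.+1%:R]natr1.
have := ler0n R n; nra.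
Qed.

Section EmpiricalKernel.
Variables (R : realFieldType) (S A Rew : finType) (D : dataset S A Rew).

Lemma sum_N_sas s a : (\sum_s' N_sas D s a s')%N = N_sa D s a.
Proof.
rewrite /N_sa /N_sas; elim: D => [|x D' IH] /=; first by rewrite big1.
rewrite big_split /= IH; congr (_ + _)%N.
case: (x.1.1.1 == s); case: (x.1.1.2 == a) => /=; try by rewrite big1.
by rewrite (bigD1 x.2) //= eqxx big1 // => s' /negbTE; rewrite eq_sym => ->.
Qed.

Lemma P_D_ge0 s a s' : 0 <= P_D R D s a s'.
Proof. by rewrite /P_D; case: ifP => // _; rewrite divr_ge0. Qed.

Lemma sum_P_D_supp (pi : S -> A -> R) : batch_constrained D pi ->
  forall s a, pi s a != 0 -> \sum_s' P_D R D s a s' = 1.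
Proof.
move=> bc s a pi_neq0.
have N_neq0 : N_sa D s a != 0%N by apply: contra pi_neq0 => /eqP/bc ->.
by rewrite /P_D (negbTE N_neq0) -mulr_suml -natr_sum sum_N_sas divff ?pnatr_eq0.
Qed.

End EmpiricalKernel.

Section Visitation.
Variables (R : realFieldType) (S A Rew : finType).
Variables (layer : S -> nat) (s0 : S) (H : nat) (pi : S -> A -> R).
Hypotheses (pi_ge0 : forall s a, 0 <= pi s a) (sum_pi : forall s, \sum_a pi s a = 1).

Local Notation rho := (rho_layer layer s0 H pi).

Lemma rho_layer_ge0 (P : S -> A -> S -> R) :
  (forall s a s', 0 <= P s a s') -> forall h s, 0 <= rho P h s.
Proof.
move=> P_ge0; elim=> [|h IH] s /=; first by case: ifP; rewrite // divr_ge0.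
by do 2!apply: sumr_ge0 => ? _; rewrite !mulr_ge0.
Qed.

Lemma sum_rho_layerS (P : S -> A -> S -> R) :
  (forall s a, pi s a != 0 -> \sum_s' P s a s' = 1) ->
  forall h, \sum_s rho P h.+1 s = \sum_(t | layer t == h) rho P h t.
Proof.
move=> sum_P h; rewrite /= exchange_big; apply: eq_bigr => t _.
rewrite exchange_big -[RHS]mulr1 -(sum_pi t) mulr_sumr; apply: eq_bigr => b _.
rewrite -mulr_sumr -mulrA; have [->|/sum_P ->] := eqVneq (pi t b) 0.
  by rewrite !mul0r.
by rewrite mulr1.
Qed.

Lemma layer_mass_le (P : S -> A -> S -> R) :
  (forall s a s', 0 <= P s a s') -> (forall s a, pi s a != 0 -> \sum_s' P s a s' = 1) ->
  forall h, \sum_(s | layer s == h) rho P h s <= 1 / H%:R.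
Proof.
move=> P_ge0 sum_P; elim=> [|h IH].
  apply: le_trans (ler_sum_subset (rho_layer_ge0 P_ge0 0%N) (fun _ _ => isT)) _.
  by rewrite /= -big_mkcond big_pred1_eq.
apply: le_trans IH.
apply: le_trans (ler_sum_subset (rho_layer_ge0 P_ge0 h.+1) (fun _ _ => isT)) _.
by rewrite sum_rho_layerS.
Qed.

Lemma rho_s_le (P : S -> A -> S -> R) :
  (forall s a s', 0 <= P s a s') -> (forall s a, pi s a != 0 -> \sum_s' P s a s' = 1) ->
  forall s, rho_s layer s0 H pi P s <= 1 / H%:R.
Proof.
move=> P_ge0 sum_P s; apply: le_trans (layer_mass_le P_ge0 sum_P (layer s)).
exact: (ler_term_sum (F := rho P (layer s)) (rho_layer_ge0 P_ge0 _)).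
Qed.

Section Perturbation.
Variables (P Q : S -> A -> S -> R) (eps : R).
Hypotheses (P_ge0 : forall s a s', 0 <= P s a s') (sum_P : forall s a, \sum_s' P s a s' = 1).
Hypotheses (Q_ge0 : forall s a s', 0 <= Q s a s')
  (sum_Q : forall s a, pi s a != 0 -> \sum_s' Q s a s' = 1).
Hypotheses (eps_ge0 : 0 <= eps) (dist_QP : forall s a, 0 < rho_sa layer s0 H pi Q s a ->
  \sum_s' `|Q s a s' - P s a s'| <= eps).

Lemma rho_sa_dist_le s a :
  rho_sa layer s0 H pi Q s a * \sum_s' `|Q s a s' - P s a s'|
    <= rho_sa layer s0 H pi Q s a * eps.
Proof.
have : 0 <= rho_sa layer s0 H pi Q s a := mulr_ge0 (rho_layer_ge0 Q_ge0 _ s) (pi_ge0 s a).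
rewrite le_eqVlt => /predU1P[<-|rho_gt0]; first by rewrite !mul0r.
by rewrite ler_wpM2l ?dist_QP ?ltW.
Qed.

Lemma dist_rho_layerS_le h s :
  `|rho P h.+1 s - rho Q h.+1 s| <= \sum_(t | layer t == h) \sum_b
    (`|rho P h t - rho Q h t| * pi t b * P t b s
     + rho Q h t * pi t b * `|Q t b s - P t b s|).
Proof.
rewrite /= -sumrB; apply: le_trans (ler_norm_sum _ _ _) _; apply: ler_sum => t _.
rewrite -sumrB; apply: le_trans (ler_norm_sum _ _ _) _; apply: ler_sum => b _.
have -> : rho P h t * pi t b * P t b s - rho Q h t * pi t b * Q t b s
    = (rho P h t - rho Q h t) * pi t b * P t b s
      + rho Q h t * pi t b * (P t b s - Q t b s) by ring.
apply: le_trans (ler_normD _ _) _.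
rewrite !normrM (ger0_norm (pi_ge0 t b)) (ger0_norm (P_ge0 t b s)).
by rewrite (ger0_norm (rho_layer_ge0 Q_ge0 h t)) (distrC (P t b s)).
Qed.

Lemma layer_dist_le h :
  \sum_(s | layer s == h) `|rho P h s - rho Q h s| <= h%:R * eps / H%:R.
Proof.
elim: h => [|h IH]; first by rewrite big1 ?mul0r // => s _; rewrite subrr normr0.
apply: le_trans (ler_sum_subset (fun _ => normr_ge0 _) (fun _ _ => isT)) _.
apply: le_trans (ler_sum _ (fun s _ => dist_rho_layerS_le h s)) _.
rewrite exchange_big /=.
have step t : layer t == h ->
    \sum_s \sum_b (`|rho P h t - rho Q h t| * pi t b * P t b s
                   + rho Q h t * pi t b * `|Q t b s - P t b s|)
    <= `|rho P h t - rho Q h t| + rho Q h t * eps.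
  move=> /eqP t_h; rewrite exchange_big /=.
  under eq_bigr => b _ do rewrite big_split /= -!mulr_sumr sum_P mulr1.
  rewrite big_split /= -mulr_sumr sum_pi mulr1 lerD2l -t_h.
  apply: le_trans (ler_sum _ (fun b _ => rho_sa_dist_le t b)) _.
  by rewrite /rho_sa -mulr_suml -mulr_sumr sum_pi mulr1.
apply: le_trans (ler_sum _ step) _; rewrite big_split -mulr_suml /=.
apply: le_trans (lerD IH (ler_wpM2r eps_ge0 (layer_mass_le Q_ge0 sum_Q h))) _.
by rewrite -natr1 !mulrDl !mul1r [_^-1 * _]mulrC.
Qed.

Lemma rho_s_dist_le s :
  `|rho_s layer s0 H pi P s - rho_s layer s0 H pi Q s| <= (layer s)%:R * eps / H%:R.
Proof.
apply: le_trans (layer_dist_le (layer s)).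
by apply: (ler_term_sum (F := fun t => `|rho P (layer s) t - rho Q (layer s) t|)).
Qed.

Lemma rho_sar_dist_le (Rk RQ : S -> A -> Rew -> R) (epsR : R) s a r :
  (forall s a r, 0 <= Rk s a r) -> (forall s a, \sum_r Rk s a r = 1) -> 0 <= epsR ->
  (0 < rho_sa layer s0 H pi Q s a -> `|RQ s a r - Rk s a r| <= epsR) ->
  `|rho_sar layer s0 H pi P Rk s a r - rho_sar layer s0 H pi Q RQ s a r|
    <= `|rho_s layer s0 H pi P s - rho_s layer s0 H pi Q s| + epsR.
Proof.
move=> Rk_ge0 sum_Rk epsR_ge0 dist_R.
rewrite /rho_sar /rho_sa; set x := rho_s _ _ _ _ P s; set y := rho_s _ _ _ _ Q s.
have y_ge0 : 0 <= y := rho_layer_ge0 Q_ge0 (layer s) s.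
have y_le1 : y <= 1.
  apply: le_trans (rho_s_le Q_ge0 sum_Q s) _.
  by case: H => [|n]; rewrite mul1r ?invr0 // invf_le1 ?ler1n.
have pi_le1 : pi s a <= 1 := le1_of_sum1 a (pi_ge0 s) (sum_pi s).
have -> : x * pi s a * Rk s a r - y * pi s a * RQ s a r
    = (x - y) * (pi s a * Rk s a r) + y * pi s a * (Rk s a r - RQ s a r) by ring.
apply: le_trans (ler_normD _ _) _; apply: lerD.
  rewrite normrM (ger0_norm (mulr_ge0 (pi_ge0 s a) (Rk_ge0 s a r))).
  apply: ler_piMr (normr_ge0 _) (mulr_ile1 (pi_ge0 s a) (Rk_ge0 s a r) pi_le1 _).
  exact: le1_of_sum1 r (Rk_ge0 s a) (sum_Rk s a).
rewrite normrM ger0_norm ?mulr_ge0 // distrC.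
have := mulr_ge0 y_ge0 (pi_ge0 s a); rewrite le_eqVlt => /predU1P[<-|ypi_gt0].
  by rewrite mul0r.
apply: le_trans (ler_wpM2l (ltW ypi_gt0) (dist_R ypi_gt0)) _.
by apply: ler_piMl; rewrite ?mulr_ile1.
Qed.

End Perturbation.

Lemma exists_rho_sa_gt0 (P : S -> A -> S -> R) :
  layer s0 = 0%N -> (0 < H)%N -> exists a, 0 < rho_sa layer s0 H pi P s0 a.
Proof.
move=> s0_layer H_gt0.
have : \sum_a pi s0 a != 0 by rewrite sum_pi oner_neq0.
rewrite psumr_neq0 // => /hasP[a _ pi_gt0]; exists a.
by rewrite /rho_sa /rho_s s0_layer /= eqxx mul1r mulr_gt0 ?invr_gt0 ?ltr0n.
Qed.

End Visitation.

Theorem lemma6 (R : realFieldType) (S A Rew : finType)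
  (layer : S -> nat) (s0 : S) (H : nat)
  (P : S -> A -> S -> R) (Rk : S -> A -> Rew -> R)
  (D : dataset S A Rew) (pi : S -> A -> R) (epsP epsR : R) :
  (0 < H)%N ->
  (forall s, layer s = 0%N <-> s = s0) ->
  (forall s, (layer s < H)%N) ->
  (forall s a s', 0 <= P s a s') ->
  (forall s a, \sum_(s' : S) P s a s' = 1) ->
  (forall s a r, 0 <= Rk s a r) ->
  (forall s a, \sum_(r : Rew) Rk s a r = 1) ->
  (forall s a, 0 <= pi s a) ->
  (forall s, \sum_(a : A) pi s a = 1) ->
  batch_constrained D pi ->
  (forall s a, 0 < rho_sa layer s0 H pi (P_D R D) s a ->
     \sum_(s' : S) `|P_D R D s a s' - P s a s'| <= epsP) ->
  (forall s a r, 0 < rho_sa layer s0 H pi (P_D R D) s a ->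
     `|R_D R D s a r - Rk s a r| <= epsR) ->
  \sum_(s : S) `|rho_s layer s0 H pi P s - rho_s layer s0 H pi (P_D R D) s|
  + \sum_(s : S) \sum_(a : A) \sum_(r : Rew)
      `|rho_sar layer s0 H pi P Rk s a r - rho_sar layer s0 H pi (P_D R D) (R_D R D) s a r|
  <= #|S|%:R * (#|A|%:R * #|Rew|%:R + 1) * ((H%:R - 1) / 2) * epsP
     + #|S|%:R * #|A|%:R * #|Rew|%:R * epsR.
Proof.
move=> H_gt0 layer0 layer_lt P_ge0 sum_P Rk_ge0 sum_Rk pi_ge0 sum_pi bc dist_P dist_R.
have [a0 rho_gt0] := exists_rho_sa_gt0 pi_ge0 sum_pi (P_D R D) (proj2 (layer0 s0) erefl) H_gt0.
have epsP_ge0 : 0 <= epsP := le_trans (sumr_ge0 _ (fun _ _ => normr_ge0 _)) (dist_P _ _ rho_gt0).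
have epsR_ge0 (r : Rew) : 0 <= epsR := le_trans (normr_ge0 _) (dist_R _ _ r rho_gt0).
have sum_PD := sum_P_D_supp bc.
set c := (H%:R - 1) / 2 * epsP.
have dist_s s : `|rho_s layer s0 H pi P s - rho_s layer s0 H pi (P_D R D) s| <= c.
  have := rho_s_dist_le pi_ge0 sum_pi P_ge0 sum_P (@P_D_ge0 _ _ _ _ D) sum_PD
    epsP_ge0 dist_P s.
  by move/le_trans; apply; rewrite mulrAC ler_wpM2r ?ratio_le_half_pred.
have dist_sar s a r : `|rho_sar layer s0 H pi P Rk s a r
    - rho_sar layer s0 H pi (P_D R D) (R_D R D) s a r| <= c + epsR.
  have := rho_sar_dist_le pi_ge0 sum_pi P (@P_D_ge0 _ _ _ _ D) sum_PD
    Rk_ge0 sum_Rk (epsR_ge0 r) (dist_R s a r).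
  by move/le_trans; apply; rewrite lerD2r.
apply: le_trans (lerD (ler_sum _ (fun s _ => dist_s s))
  (ler_sum _ (fun s _ => ler_sum _ (fun a _ => ler_sum _ (fun r _ => dist_sar s a r))))) _.
rewrite !sumr_const /c le_eqVlt; apply/predU1P; left; ring.
Qed.
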